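(* Let $\mathcal{G}=(N,\mathcal{W})$ be an SVG and let $i\neq j$ be players in $N$, where $j$ is a YES-blocker (or a NO-blocker) of $\mathcal{G}$. Let $\hat{\mathcal{G}}=\mathcal{G}^{j\to i}$ be the game obtained when $j$ fully donates its vote to $i$. Then $$RM'_i(\hat{\mathcal{G}})\le RM'_i(\mathcal{G})+RM'_j(\mathcal{G}).$$
   Context: A simple voting game (SVG) is a pair $\mathcal{G}=(N,\mathcal{W})$ with $N$ a nonempty finite set of $n$ players and $\mathcal{W}\subseteq 2^N$ monotone, $\emptyset\notin\mathcal{W}$, $N\in\mathcal{W}$. Divisions are identified with their YES-sets $S\subseteq N$; $S$ is winning iff $S\in\mathcal{W}$. Decisiveness and success: - Player $k$ is YES-decisive in $S$ if $k\in S\in\mathcal{W}$ and $S\setminus\{k\}\notin\mathcal{W}$. - Player $k$ is NO-decisive in $S$ if $k\notin S\notin\mathcal{W}$ and $S\cup\{k\}\in\mathcal{W}$. - Player $k$ is decisive if it is either. - Player $k$ is successful in $S$ if ($k\in S\in\mathcal{W}$) or ($k\notin S\notin\mathcal{W}$). Loyal children: if $S\in\mathcal{W}$, the loyal children are the sets $S\setminus\{m\}\in\mathcal{W}$ with $m\in S$. If $S\notin\mathcal{W}$, they are the sets $S\cup\{m\}\notin\mathcal{W}$ with $m\notin S$. The recursive efficacy score $\alpha_k(S)$ is defined by: - $\alpha_k(S)=1$ if $k$ is decisive in $S$; - $\alpha_k(S)=0$ if $k$ is not successful in $S$; - otherwise, $\alpha_k(S)$ is the average of $\alpha_k$ over the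 loyal children of $S$. The a priori Recursive Measure is $RM'_k=2^{-n}\sum_{S\subseteq N}\alpha_k(S)$. Blockers: $b$ is a YES-blocker if $b\in S$ for all $S\in\mathcal{W}$, and a NO-blocker if $b\notin S$ for all $S\notin\mathcal{W}$. Donation game: $\mathcal{G}^{j\to i}$ is the SVG on the same player set $N$ whose winning sets are determined as follows. For $S\subseteq N\setminus\{i,j\}$: - $S\cup\{i,j\}$ and $S\cup\{i\}$ are winning iff $S\cup\{i,j\}\in\mathcal{W}$; - $S\cup\{j\}$ and $S$ are winning iff $S\in\mathcal{W}$. In particular $j$ is a dummy in $\mathcal{G}^{j\to i}$. *)

From mathcomp Require Import all_boot all_order all_algebra.
Set Implicit Arguments. Unset Strict Implicit. Unset Printing Implicit Defensive.
Import Order.TTheory GRing.Theory Num.Theory.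
Local Open Scope ring_scope.

Section SVG.
Variable N : finType.
Implicit Types (W : {set N} -> bool) (S : {set N}) (k : N).

Definition is_svg W : Prop :=
  [/\ forall S T : {set N}, S \subset T -> W S -> W T, ~~ W set0 & W setT].

Definition yes_decisive W k S := [&& k \in S, W S & ~~ W (S :\ k)].
Definition no_decisive W k S := [&& k \notin S, ~~ W S & W (k |: S)].
Definition decisive W k S := yes_decisive W k S || no_decisive W k S.
Definition successful W k S := ((k \in S) && W S) || ((k \notin S) && ~~ W S).

Definition loyal_children W S : {set {set N}} :=
  if W S then [set S :\ m | m in [set m in S | W (S :\ m)]]
  else [set m |: S | m in [set m in ~: S | ~~ W (m |: S)]].

(* alpha with explicit recursion fuel; along loyal children a winning set
   shrinks and a losing set grows, so recursion depth is at most #|N|, and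
   fuel #|N|.+1 computes the recursive definition exactly. *)
Fixpoint alpha_fuel (fuel : nat) W k S : rat :=
  match fuel with
  | 0 => 0
  | f.+1 =>
    if decisive W k S then 1
    else if ~~ successful W k S then 0
    else (\sum_(C in loyal_children W S) alpha_fuel f W k C)
           / (#|loyal_children W S|)%:R
  end.

Definition alpha W k S : rat := alpha_fuel #|N|.+1 W k S.

Definition RM W k : rat := (\sum_(S : {set N}) alpha W k S) / (2 ^ #|N|)%:R.

Definition yes_blocker W b := forall S, W S -> b \in S.
Definition no_blocker W b := forall S, ~~ W S -> b \notin S.

Definition donate W j i : {set N} -> bool :=
  fun S => if i \in S then W (j |: S) else W (S :\ j).

End SVG.

From mathcomp Require Import all_boot all_order all_algebra.
From mathcomp Require Import lra zify.
From Stdlib Require Import FunctionalExtensionality.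
Set Implicit Arguments. Unset Strict Implicit. Unset Printing Implicit Defensive.
Import Order.TTheory GRing.Theory Num.Theory.
Local Open Scope ring_scope.

(* If j is a YES-blocker, every set avoiding j loses, so on such sets alpha_j
   is the mean of its values over the one-vote extensions.  Induction on the
   number of NO-voters then gives the gain bound
   alpha_j (S + i) - alpha_j S <= alpha_i S  for i not in S.
   In the donation game i becomes a YES-blocker and the same mean-value
   recursion identifies its alpha_i (S) with alpha_j (S + j) if i is in S and
   with alpha_j (S - j + i) otherwise.  Grouping the sets four at a time
   (S, S + i, S + j, S + i + j) and applying the gain bound twice proves the
   inequality.  The NO-blocker case follows by passing to the dual game
   S |-> ~ W (N - S), which preserves alpha and turns NO-blockers into
   YES-blockers. *)

Section SetsOfPlayers.
Variable N : finType.
Implicit Types (S T : {set N}) (k m : N).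

Definition monotone_game (W : {set N} -> bool) :=
  forall S T, S \subset T -> W S -> W T.

Lemma setC_setU1 m S : ~: (m |: S) = ~: S :\ m.
Proof. by apply/setP=> x; rewrite !inE negb_or andbC. Qed.

Lemma setC_setD1 m S : ~: (S :\ m) = m |: ~: S.
Proof. by apply/setP=> x; rewrite !inE negb_and negbK. Qed.

Lemma card_setC_setU1 m S : m \notin S -> #|~: S| = #|~: (m |: S)|.+1.
Proof. by move=> mS; rewrite setC_setU1 (cardsD1 m) inE mS. Qed.

Lemma setU1_inj_notin S : {in ~: S &, injective (fun m => m |: S)}.
Proof.
move=> a b; rewrite !inE => aS _ eab.
by move: (setU11 a S); rewrite eab !inE (negbTE aS) orbF => /eqP.
Qed.

Lemma setD1_notin m S : m \notin S -> S :\ m = S.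
Proof.
by move=> mS; apply/setP=> x; rewrite !inE; case: eqP => // ->; rewrite (negbTE mS).
Qed.

Lemma sum_setC_setU1 (R : nmodType) (F : {set N} -> R) k S : k \notin S ->
  \sum_(m in ~: S) F (m |: (k |: S)) =
  F (k |: S) + \sum_(m in ~: (k |: S)) F (m |: (k |: S)).
Proof. by move=> kS; rewrite (big_setD1 k) ?inE // setUA setUid setC_setU1. Qed.

Lemma sum_pair_setU1 (R : nmodType) (F : {set N} -> R) k :
  \sum_(S : {set N}) F S = \sum_(S : {set N}) (if k \in S then 0 else F S + F (k |: S)).
Proof.
have -> : \sum_(S : {set N}) (if k \in S then 0 else F S + F (k |: S)) =
          \sum_(S : {set N} | k \notin S) (F S + F (k |: S)).
  by rewrite [RHS]big_mkcond; apply: eq_bigr => S _; case: (k \in S).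
rewrite (bigID (fun S : {set N} => k \in S)) big_split /= addrC; congr (_ + _).
rewrite (reindex_onto (fun S => k |: S) (fun S => S :\ k)) => [|S kS]; last exact: setD1K.
apply: eq_bigl => S; rewrite setU11 /=.
case: (boolP (k \in S)) => kS; last by rewrite setU1K ?eqxx.
by apply/negbTE/eqP=> /setP/(_ k); rewrite !inE eqxx kS.
Qed.

End SetsOfPlayers.

Section RecursiveEfficacy.
Variable N : finType.
Implicit Types (W : {set N} -> bool) (S T : {set N}) (k m : N).

Definition loyal_rank W S : nat := if W S then #|S| else #|~: S|.

Lemma loyal_rank_child W S C :
  C \in loyal_children W S -> (loyal_rank W C < loyal_rank W S)%N.
Proof.
rewrite /loyal_children /loyal_rank; case: ifP => WS /imsetP[m].
  by rewrite inE => /andP[mS WSm] ->; rewrite WSm (cardsD1 m S) mS.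
rewrite !inE => /andP[mS /negbTE WmS] ->.
by rewrite WmS (card_setC_setU1 mS).
Qed.

Lemma loyal_rank_max W S : (loyal_rank W S <= #|N|)%N.
Proof. by rewrite /loyal_rank; case: ifP => _; apply: max_card. Qed.

Lemma alpha_fuel_enough W k f f' S :
  (loyal_rank W S < f)%N -> (f <= f')%N -> alpha_fuel f W k S = alpha_fuel f' W k S.
Proof.
elim: f f' S => [|f IH] [|f'] S //= rankS le_ff'.
case: (decisive W k S) => //; case: (successful W k S) => //=.
congr (_ / _); apply: eq_bigr => C /loyal_rank_child rankC.
by apply: IH; lia.
Qed.

Lemma alphaE W k S : alpha W k S =
  if decisive W k S then 1 else if ~~ successful W k S then 0
  else (\sum_(C in loyal_children W S) alpha W k C) / #|loyal_children W S|%:R.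
Proof.
rewrite {1}/alpha /=; case: (decisive W k S) => //; case: (successful W k S) => //=.
congr (_ / _); apply: eq_bigr => C /loyal_rank_child rankC.
by apply: (@alpha_fuel_enough W k #|N|) => //; have := loyal_rank_max W S; lia.
Qed.

Lemma alpha_ge0 W k S : 0 <= alpha W k S.
Proof.
rewrite /alpha; elim: #|N|.+1 S => [|f IH] S //=.
case: (decisive W k S) => //; case: (successful W k S) => //=.
by rewrite divr_ge0 ?sumr_ge0.
Qed.

Lemma alpha_yes_decisive W k S : k \in S -> W S -> ~~ W (S :\ k) -> alpha W k S = 1.
Proof. by move=> kS WS WSk; rewrite alphaE /decisive /yes_decisive kS WS WSk. Qed.

Lemma alpha_no_decisive W k S : k \notin S -> ~~ W S -> W (k |: S) -> alpha W k S = 1.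
Proof. by move=> kS WS WkS; rewrite alphaE /decisive /no_decisive kS WS WkS orbT. Qed.

Lemma alpha_in_losing W k S : k \in S -> ~~ W S -> alpha W k S = 0.
Proof.
move=> kS /negbTE WS.
by rewrite alphaE /decisive /yes_decisive /no_decisive /successful kS WS.
Qed.

(* Every extension of [S] is then a loyal child, and [k] is successful in [S]
   but not decisive. *)
Lemma alpha_losing_mean W k S :
  ~~ W S -> k \notin S -> (forall m, m \notin S -> ~~ W (m |: S)) ->
  #|~: S|%:R * alpha W k S = \sum_(m in ~: S) alpha W k (m |: S).
Proof.
move=> WS kS Wext.
have children : loyal_children W S = [set m |: S | m in ~: S].
  rewrite /loyal_children (negbTE WS) (_ : [set m in ~: S | _] = ~: S) //.
  by apply/setP=> m; rewrite !inE andb_idr // => /Wext.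
rewrite alphaE /decisive /yes_decisive /no_decisive /successful (negbTE kS).
rewrite (negbTE WS) (negbTE (Wext k kS)) /= children.
have cardS : #|~: S|%:R != 0 :> rat.
  by rewrite pnatr_eq0 -lt0n; apply/card_gt0P; exists k; rewrite inE.
have inj := setU1_inj_notin (S := S).
by rewrite big_imset // card_in_imset //= mulrC divfK.
Qed.

End RecursiveEfficacy.

Section YesBlocker.
Variables (N : finType) (W : {set N} -> bool) (j : N).
Hypotheses (W_mono : monotone_game W) (Wj : yes_blocker W j).
Implicit Types (S T : {set N}) (m : N).

Lemma yes_blocker_losing T : j \notin T -> ~~ W T.
Proof. by move=> jT; apply/negP=> /Wj; rewrite (negbTE jT). Qed.

Lemma yes_blocker_losing_setU1 m T : j \notin T -> m != j -> ~~ W (m |: T).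
Proof. by move=> jT mj; apply: yes_blocker_losing; rewrite !inE negb_or eq_sym mj. Qed.

(* If [W (j |: T)], both sides count 1 per extension, since [j] is decisive in
   [T] and in each of its extensions. *)
Lemma alpha_blocker_mean T : j \notin T ->
  #|~: T|%:R * alpha W j T = \sum_(m in ~: T) alpha W j (m |: T).
Proof.
move=> jT; have WT := yes_blocker_losing jT.
have [WjT|WjT] := boolP (W (j |: T)); last first.
  apply: alpha_losing_mean => // m _.
  by case: (eqVneq m j) => [->|mj] //; apply: yes_blocker_losing_setU1.
have all1 : \sum_(m in ~: T) alpha W j (m |: T) = \sum_(m in ~: T) 1.
  apply: eq_bigr => m _; case: (eqVneq m j) => [->|mj].
    by apply: alpha_yes_decisive; rewrite ?setU11 ?setU1K.
  apply: alpha_no_decisive; rewrite ?yes_blocker_losing_setU1 //.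
    by rewrite !inE negb_or eq_sym mj.
  by apply: W_mono WjT; rewrite setUCA subsetUr.
by rewrite all1 sumr_const (alpha_no_decisive jT WT WjT) mulr1.
Qed.

Variable i : N.
Hypothesis neq_ij : i != j.

Lemma alpha_blocker_gain S : i \notin S ->
  alpha W j (i |: S) - alpha W j S <= alpha W i S.
Proof.
move: {2}#|~: S|.+1 (ltnSn #|~: S|) => n; elim: n S => [|n IH] S // ltSn iS.
have ge0 := alpha_ge0 W.
have [jS|jS] := boolP (j \in S).
  have jiS : j \in i |: S by rewrite !inE jS orbT.
  have [WiS|WiS] := boolP (W (i |: S)); last first.
    by rewrite (alpha_in_losing jiS WiS); have := ge0 j S; have := ge0 i S; lra.
  have jnotin T : j \notin T :\ j by rewrite setD11.
  rewrite (alpha_yes_decisive jiS WiS (yes_blocker_losing (jnotin _))).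
  have [WS|WS] := boolP (W S).
    by rewrite (alpha_yes_decisive jS WS (yes_blocker_losing (jnotin _))) subrr.
  by rewrite (alpha_no_decisive iS WS WiS); have := ge0 j S; lra.
have WS := yes_blocker_losing jS.
have jiS : j \notin i |: S by rewrite !inE negb_or jS andbT eq_sym.
have [WjS|WjS] := boolP (W (j |: S)).
  have WjiS : W (j |: (i |: S)) by apply: W_mono WjS; rewrite setUCA subsetUr.
  rewrite (alpha_no_decisive jS WS WjS).
  by rewrite (alpha_no_decisive jiS (yes_blocker_losing jiS) WjiS) subrr.
have Sext m : m \notin S -> ~~ W (m |: S).
  by case: (eqVneq m j) => [->|mj] // _; apply: yes_blocker_losing_setU1.
have cpos : 0 < #|~: S|%:R :> rat by rewrite ltr0n; apply/card_gt0P; exists i; rewrite inE.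
rewrite -(ler_pM2l cpos) mulrBr (alpha_losing_mean WS iS Sext) (alpha_blocker_mean jS).
rewrite (card_setC_setU1 iS) -addn1 natrD mulrDl mul1r alpha_blocker_mean //.
rewrite [_ + alpha W j _]addrC -sum_setC_setU1 // -sumrB.
apply: ler_sum => m; rewrite inE => mS.
case: (eqVneq m i) => [->|mi]; first by rewrite setUA setUid subrr.
rewrite setUCA; apply: IH; last by rewrite !inE negb_or eq_sym mi.
by move: ltSn; rewrite (card_setC_setU1 mS).
Qed.

End YesBlocker.

Section DonationToBlocker.
Variables (N : finType) (W : {set N} -> bool) (j i : N).
Hypotheses (W_mono : monotone_game W) (Wj : yes_blocker W j) (neq_ij : i != j).
Implicit Types (S T : {set N}) (m : N).

Local Notation Wd := (donate W j i).
Local Notation Wj_losing := (yes_blocker_losing Wj).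

Lemma donate_mono S T : S \subset T -> Wd S -> Wd T.
Proof.
rewrite /donate => ST; have [iS|iS] := ifPn.
  by rewrite (subsetP ST i iS); apply: W_mono; apply: setUS.
by rewrite (negbTE (Wj_losing _)) // setD11.
Qed.

Lemma donate_yes_blocker : yes_blocker Wd i.
Proof.
move=> S; rewrite /donate; case: ifPn => // _.
by rewrite (negbTE (Wj_losing _)) // setD11.
Qed.

Lemma alpha_donate_in S : i \in S -> alpha Wd i S = alpha W j (j |: S).
Proof.
move=> iS; have WdS : Wd S = W (j |: S) by rewrite /donate iS.
have jjS := setU11 j S.
have [WjS|WjS] := boolP (W (j |: S)); last first.
  by rewrite (alpha_in_losing jjS WjS) (alpha_in_losing iS) ?WdS.
rewrite (alpha_yes_decisive jjS WjS) ?Wj_losing ?setD11 //.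
apply: alpha_yes_decisive; rewrite ?WdS //.
by rewrite /donate setD11 Wj_losing // !inE eqxx.
Qed.

(* The right-hand side of [alpha_donate_notin] satisfies the recursion that
   [alpha_blocker_mean] yields for [alpha Wd i], since [i] is a YES-blocker of [Wd]. *)
Lemma alpha_donor_mean S : i \notin S ->
  #|~: S|%:R * alpha W j (i |: (S :\ j)) =
  alpha W j (j |: (i |: S)) + \sum_(m in ~: S :\ i) alpha W j (i |: ((m |: S) :\ j)).
Proof.
move=> iS; set T := i |: (S :\ j).
have jT : j \notin T by rewrite !inE eqxx orbF eq_sym.
have jjT : j |: T = j |: (i |: S).
  by apply/setP=> x; rewrite !inE; case: (x == j).
have compT : ~: T :\ j = ~: S :\ i :\ j.
  by apply/setP=> x; rewrite !inE; case: (x == j); case: (x == i).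
have extT m : m \in ~: T :\ j ->
    alpha W j (m |: T) = alpha W j (i |: ((m |: S) :\ j)).
  rewrite !inE => /andP[mj _]; congr (alpha W j _); apply/setP=> x; rewrite !inE.
  case: (eqVneq x j) => [->|_]; first by rewrite (eq_sym j m) (negbTE mj).
  by case: (x == m); case: (x == i).
have meanT := alpha_blocker_mean W_mono Wj jT.
rewrite (big_setD1 j) in meanT; last by rewrite inE.
rewrite jjT (eq_bigr _ extT) compT in meanT.
have [jS|jS] := boolP (j \in S).
  have compS : ~: S :\ i :\ j = ~: S :\ i by apply: setD1_notin; rewrite !inE jS andbF.
  have -> : #|~: S| = #|~: T|.
    by rewrite (cardsD1 i) (cardsD1 j (~: T)) compT compS !in_setC iS jT.
  by rewrite meanT compS.
rewrite /T (setD1_notin jS) in meanT *.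
rewrite (big_setD1 j); last by rewrite !inE jS (eq_sym j i) neq_ij.
rewrite setU1K // addrCA -meanT (card_setC_setU1 iS) -addn1 natrD.
by rewrite mulrDl mul1r addrC.
Qed.

Lemma alpha_donate_notin S : i \notin S -> alpha Wd i S = alpha W j (i |: (S :\ j)).
Proof.
move: {2}#|~: S|.+1 (ltnSn #|~: S|) => n; elim: n S => [|n IH] S // ltSn iS.
have cpos : #|~: S|%:R != 0 :> rat.
  by rewrite pnatr_eq0 -lt0n; apply/card_gt0P; exists i; rewrite inE.
apply: (mulfI cpos); rewrite alpha_donor_mean //.
rewrite (alpha_blocker_mean donate_mono donate_yes_blocker iS) (big_setD1 i) ?inE //.
rewrite alpha_donate_in ?setU11 //; congr (_ + _); apply: eq_bigr => m.
rewrite !inE => /andP[mi mS]; apply: IH; last by rewrite !inE negb_or eq_sym mi.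
by move: ltSn; rewrite (card_setC_setU1 mS).
Qed.

Lemma RM_donate_le : RM Wd i <= RM W i + RM W j.
Proof.
rewrite /RM -mulrDl; apply: ler_wpM2r; first by rewrite invr_ge0 ler0n.
rewrite -big_split /=.
have donateE S : alpha Wd i S =
    if i \in S then alpha W j (j |: S) else alpha W j (i |: (S :\ j)).
  by case: ifPn; [apply: alpha_donate_in | apply: alpha_donate_notin].
under eq_bigr => S _ do rewrite donateE.
rewrite (sum_pair_setU1 _ j) [X in _ <= X](sum_pair_setU1 _ j).
rewrite (sum_pair_setU1 _ i) [X in _ <= X](sum_pair_setU1 _ i).
(* For [S] avoiding [i] and [j], the donation game contributes
   [2 alpha_j (i |: S) + 2 alpha_j (j |: i |: S)] on [S], [i |: S], [j |: S],
   [j |: i |: S]; the gain bound at [S] and at [j |: S] pays for it. *)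
apply: ler_sum => S _; have [//|iS] := boolP (i \in S).
have ijS : i \notin j |: S by rewrite !inE negb_or neq_ij.
have iijS : i \in j |: (i |: S) by rewrite setUCA setU11.
have jiS : (j \in i |: S) = (j \in S) by rewrite !inE (eq_sym j i) (negbTE neq_ij).
rewrite jiS.
have [|jS] := boolP (j \in S); first by rewrite addr0.
rewrite (negbTE ijS) iijS setU11 (setD1_notin jS) setU1K // [j |: (j |: _)]setUA setUid.
have gainS := alpha_blocker_gain W_mono Wj neq_ij iS.
have gainjS := alpha_blocker_gain W_mono Wj neq_ij ijS.
rewrite setUCA in gainjS.
have := alpha_ge0 W i (i |: S); have := alpha_ge0 W i (j |: (i |: S)).
lra.
Qed.

End DonationToBlocker.

Section Duality.
Variable N : finType.
Implicit Types (W : {set N} -> bool) (S : {set N}) (k : N).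

Definition dual_game W : {set N} -> bool := fun S => ~~ W (~: S).

Lemma setC_setD1C k S : ~: (~: S :\ k) = k |: S.
Proof. by rewrite setC_setD1 setCK. Qed.

Lemma setC_setU1C k S : ~: (k |: ~: S) = S :\ k.
Proof. by rewrite setC_setU1 setCK. Qed.

Lemma decisive_dual W k S : decisive (dual_game W) k (~: S) = decisive W k S.
Proof.
rewrite /decisive /yes_decisive /no_decisive /dual_game setCK setC_setD1C setC_setU1C.
by rewrite !inE !negbK orbC.
Qed.

Lemma successful_dual W k S : successful (dual_game W) k (~: S) = successful W k S.
Proof. by rewrite /successful /dual_game setCK !inE !negbK orbC. Qed.

Lemma loyal_children_dual W S :
  loyal_children (dual_game W) (~: S) = [set ~: C | C in loyal_children W S].
Proof.
rewrite /loyal_children {1}/dual_game setCK; case: (W S); rewrite /= -imset_comp.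
  rewrite (_ : [set m in S | _] = [set m in S | W (S :\ m)]).
    by apply: eq_imset => m; rewrite /= setC_setD1.
  by apply/setP=> m; rewrite !inE /dual_game setC_setU1C negbK.
rewrite (_ : [set m in ~: S | _] = [set m in ~: S | ~~ W (m |: S)]).
  by apply: eq_imset => m; rewrite /= setC_setU1.
by apply/setP=> m; rewrite !inE /dual_game setC_setD1C.
Qed.

Lemma alpha_dual W k S : alpha (dual_game W) k (~: S) = alpha W k S.
Proof.
rewrite /alpha; elim: #|N|.+1 S => [|f IH] S //=.
rewrite decisive_dual successful_dual loyal_children_dual.
rewrite big_imset /=; last by move=> A B _ _; apply: setC_inj.
rewrite card_imset; last exact: setC_inj.
by under eq_bigr => C _ do rewrite IH.
Qed.

Lemma RM_dual W k : RM (dual_game W) k = RM W k.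
Proof.
rewrite /RM (reindex_inj (@setC_inj N)) /=.
by under eq_bigr => S _ do rewrite alpha_dual.
Qed.

Lemma dual_mono W : monotone_game W -> monotone_game (dual_game W).
Proof. by move=> W_mono S T ST; apply: contra; apply: W_mono; rewrite setCS. Qed.

Lemma no_blocker_dual W k : no_blocker W k -> yes_blocker (dual_game W) k.
Proof. by move=> Wk S /Wk; rewrite inE negbK. Qed.

Lemma donate_dual W j i : dual_game (donate W j i) = donate (dual_game W) j i.
Proof.
apply: functional_extensionality => S; rewrite /dual_game /donate inE.
by case: (i \in S); rewrite /= ?setC_setU1 ?setC_setD1.
Qed.

End Duality.

Theorem lemma1 (N : finType) (W : {set N} -> bool) (i j : N)
  (HW : is_svg W) (hij : i != j)
  (hblock : yes_blocker W j \/ no_blocker W j) :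
  RM (donate W j i) i <= RM W i + RM W j.
Proof.
have [W_mono _ _] := HW.
case: hblock => [Wj|Wj]; first exact: RM_donate_le.
rewrite -RM_dual donate_dual -(RM_dual W i) -(RM_dual W j).
exact: RM_donate_le (dual_mono W_mono) (no_blocker_dual Wj) hij.
Qed.
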